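(* Let $\Omega>0$, $c_{\max}>0$, and let $x:\mathbb{R}\to\mathbb{R}$ be a $2\Omega$-bandlimited, $c_{\max}$-bounded signal with finite energy. Suppose $x$ is sampled by an AIF-TEM with parameters $\kappa>0$, $\delta>0$, window size $w\ge 1$, margin $\beta>0$ and a successfully operating MAP block, producing firing times $t_0<t_1<\dots<t_N$, biases $b_1,\dots,b_N$ and local maximal amplitudes $c_1,\dots,c_N$. Then the average oversampling $OS_a$ satisfies $$OS_{a}\le \frac{\mathbb{E}[b_n]+\mathbb{E}[c_n]}{\kappa\delta}\,\frac{\pi}{\Omega}\le \frac{\mathbb{E}[b_n]+c_{\max}}{\kappa\delta}\,\frac{\pi}{\Omega}.$$
   Context: A signal $x$ is $2\Omega$-bandlimited if its Fourier transform vanishes outside $[-\Omega,\Omega]$; it is $c_{\max}$-bounded if $|x(t)|\le c_{\max}$ for all $t$; it has finite energy if $\int_{-\infty}^\infty |x(t)|^2dt<\infty$. An AIF-TEM (adaptive integrate-and-fire time encoding machine) with parameters $\kappa,\delta>0$ and window size $w$ produces a strictly increasing sequence of firing times $t_n$ and biases $b_n>0$ such that for each $n$, $\frac1\kappa\int_{t_{n-1}}^{t_n}(x(s)+b_n)\,ds=\delta$. The local maximal amplitude is $c_n=\max_{t_{n-w}\le t\le t_n}|x(t)|$. The MAP block operates successfully (with margin $\beta>0$) if $b_n\ge c_n+\beta$ for all $n$. Write $T_n=t_n-t_{n-1}$. $\mathbb{E}[\cdot]$ denotes the average over the sample indices $n=1,\dots,N$. The average sampling frequency is $f_s=1/\mathbb{E}[T_n]$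 and the average oversampling is $OS_a=f_s\cdot\frac{\pi}{\Omega}$. *)

From HB Require Import structures.
From mathcomp Require Import all_boot all_order all_algebra.
From mathcomp Require Import all_classical all_reals all_analysis.
Set Implicit Arguments. Unset Strict Implicit. Unset Printing Implicit Defensive.
Import Order.TTheory GRing.Theory Num.Theory.
Import numFieldNormedType.Exports.
Local Open Scope classical_set_scope.
Local Open Scope ring_scope.

Section Defs.
Variable R : realType.
Local Notation mu := (@lebesgue_measure R).

Definition finite_energy (x : R -> R) : Prop :=
  measurable_fun setT x /\ (\int[mu]_(t in setT) ((x t) ^+ 2)%:E < +oo)%E.

Definition bounded_by (x : R -> R) (cmax : R) : Prop := forall t, `|x t| <= cmax.

(* 2*Omega-bandlimited: the Fourier transform X = Xr + i Xi of x vanishes outside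
   [-Omega, Omega], i.e. x is the inverse Fourier transform of a spectrum X supported
   in [-Omega, Omega]:  x(t) = 1/(2 pi) \int_{-Omega}^{Omega} X(w) e^{i w t} dw
   (real part = x(t), imaginary part = 0 since x is real-valued). *)
Definition bandlimited (Omega : R) (x : R -> R) : Prop :=
  exists Xr Xi : R -> R,
    mu.-integrable `[- Omega, Omega] (fun w => (Xr w)%:E) /\
    mu.-integrable `[- Omega, Omega] (fun w => (Xi w)%:E) /\
    forall t,
      x t = (2 * pi)^-1 * Rintegral mu `[- Omega, Omega]
                 (fun w => Xr w * cos (w * t) - Xi w * sin (w * t)) /\
      0 = Rintegral mu `[- Omega, Omega]
                 (fun w => Xr w * sin (w * t) + Xi w * cos (w * t)).

(* local maximal amplitude c_n = max_{t_{n-w} <= s <= t_n} |x(s)|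
   (n - w is truncated at 0, i.e. t_{n-w} := t_0 when n < w) *)
Definition local_max_amp (x : R -> R) (t : nat -> R) (w n : nat) : R :=
  sup [set `|x s| | s in `[t (n - w)%N, t n]].

Definition avg (N : nat) (f : nat -> R) : R :=
  N%:R^-1 * \sum_(1 <= n < N.+1) f n.

Definition aif_tem (x : R -> R) (kappa delta : R) (N : nat) (t b : nat -> R) : Prop :=
  (forall n, (n < N)%N -> t n < t n.+1) /\
  (forall n, (1 <= n <= N)%N -> 0 < b n) /\
  (forall n, (1 <= n <= N)%N ->
     kappa^-1 * Rintegral mu `[t n.-1, t n] (fun s => x s + b n) = delta /\
     mu.-integrable `[t n.-1, t n] (fun s => (x s + b n)%:E)).

Definition map_success (x : R -> R) (w N : nat) (t b : nat -> R) (beta : R) : Prop :=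
  forall n, (1 <= n <= N)%N -> local_max_amp x t w n + beta <= b n.

(* T_n = t_n - t_{n-1}; f_s = 1/E[T_n]; OS_a = f_s * pi/Omega *)
Definition avg_oversampling (Omega : R) (N : nat) (t : nat -> R) : R :=
  (avg N (fun n => t n - t n.-1))^-1 * (pi / Omega).

End Defs.

From HB Require Import structures.
From mathcomp Require Import all_boot all_order all_algebra.
From mathcomp Require Import all_classical all_reals all_analysis.
From mathcomp Require Import lra zify.
Import Order.TTheory GRing.Theory Num.Theory.
Import numFieldNormedType.Exports.
Local Open Scope classical_set_scope.
Local Open Scope ring_scope.

(* On the n-th firing interval |x| <= c_n, because [t_{n-1}, t_n] lies in the
   window [t_{n-w}, t_n] (w >= 1); hence the firing equation gives
   kappa delta = \int (x + b_n) <= (b_n + c_n) T_n.  Summing the symmetrized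
   consequences T_i a_j + T_j a_i >= 2 kappa delta (with a_n = b_n + c_n) over all
   pairs yields E[T_n] E[a_n] >= kappa delta, which is the first inequality; the
   second is c_n <= c_max. *)

Lemma cross_mul_ge (R : realDomainType) (K Ti Tj ai aj : R) :
  0 <= K -> 0 < Ti -> 0 < Tj -> K <= ai * Ti -> K <= aj * Tj ->
  K *+ 2 <= Ti * aj + Tj * ai.
Proof.
move=> K_ge0 Ti_gt0 Tj_gt0 Ki Kj.
rewrite -(ler_pM2l (mulr_gt0 Ti_gt0 Tj_gt0)).
have := mulr_ge0 K_ge0 (sqr_ge0 (Ti - Tj)).
have := ler_wpM2l (sqr_ge0 Ti) Kj.
have := ler_wpM2l (sqr_ge0 Tj) Ki.
rewrite !expr2 mulr2n; nra.
Qed.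

Lemma sum_mul_sum_ge (R : realDomainType) (I : eqType) (r : seq I)
    (T a : I -> R) (K : R) :
  0 <= K -> {in r, forall i, 0 < T i} -> {in r, forall i, K <= a i * T i} ->
  (size r)%:R ^+ 2 * K <= (\sum_(i <- r) T i) * (\sum_(j <- r) a j).
Proof.
move=> K_ge0 T_gt0 KaT.
have expand : (\sum_(i <- r) T i) * (\sum_(j <- r) a j) =
    \sum_(i <- r) \sum_(j <- r) T i * a j.
  by rewrite mulr_suml; apply: eq_bigr => i _; rewrite mulr_sumr.
have symmetrize : (\sum_(i <- r) T i) * (\sum_(j <- r) a j) *+ 2 =
    \sum_(i <- r) \sum_(j <- r) (T i * a j + T j * a i).
  rewrite mulr2n {1}expand expand [X in _ + X]exchange_big -big_split /=.
  by apply: eq_bigr => i _; rewrite -big_split.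
have : \sum_(i <- r) \sum_(j <- r) K *+ 2 <=
       (\sum_(i <- r) T i) * (\sum_(j <- r) a j) *+ 2.
  rewrite symmetrize big_seq [X in _ <= X]big_seq; apply: ler_sum => i ri.
  rewrite big_seq [X in _ <= X]big_seq; apply: ler_sum => j rj.
  by apply: cross_mul_ge; auto.
rewrite !big_const_seq count_predT !iter_addr !addr0.
have -> : K *+ 2 *+ size r *+ size r = (size r)%:R ^+ 2 * K *+ 2.
  by rewrite -natrX mulr_natl -!mulrnA; congr (_ *+ _); lia.
by rewrite lerMn2r.
Qed.

Section Average.
Variables (R : realType) (N : nat).
Hypothesis N_gt0 : (0 < N)%N.

Lemma avgD (f g : nat -> R) : avg N (fun n => f n + g n) = avg N f + avg N g.
Proof. by rewrite /avg big_split mulrDr. Qed.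

Lemma avg_le_cst (f : nat -> R) (M : R) :
  (forall n, (1 <= n <= N)%N -> f n <= M) -> avg N f <= M.
Proof.
move=> fM; rewrite /avg ler_pdivrMl ?ltr0n //.
apply: le_trans (ler_sum_nat (G := fun=> M) _) _ => [n n_in|].
  by apply: fM; lia.
by rewrite sumr_const_nat subn1 mulr_natl.
Qed.

Lemma avg_gt0 (f : nat -> R) :
  (forall n, (1 <= n <= N)%N -> 0 < f n) -> 0 < avg N f.
Proof.
move=> f_gt0; rewrite /avg mulr_gt0 ?invr_gt0 ?ltr0n //.
rewrite big_ltn ?ltnS // ltr_pwDl ?f_gt0 ?N_gt0 //.
by rewrite big_nat_cond sumr_ge0 // => n /andP[n_in _]; rewrite ltW ?f_gt0 //; lia.
Qed.

Lemma avg_mul_avg_ge (T a : nat -> R) (K : R) : 0 <= K ->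
  (forall n, (1 <= n <= N)%N -> 0 < T n) ->
  (forall n, (1 <= n <= N)%N -> K <= a n * T n) ->
  K <= avg N T * avg N a.
Proof.
move=> K_ge0 T_gt0 KaT.
have N2_gt0 : (0 : R) < N%:R ^+ 2 by rewrite exprn_gt0 ?ltr0n.
rewrite /avg mulrACA -expr2 exprVn ler_pdivlMl //.
have size_range : size (index_iota 1 N.+1) = N by rewrite size_iota subn1.
rewrite -[in X in X%:R]size_range.
apply: sum_mul_sum_ge => // n; rewrite mem_index_iota => n_in.
  by apply: T_gt0; lia.
by apply: KaT; lia.
Qed.

End Average.

Lemma Rintegral_itv_le (R : realType) (a c M : R) (f : R -> R) : a <= c ->
  (@lebesgue_measure R).-integrable `[a, c] (fun s => (f s)%:E) ->
  (forall s, a <= s <= c -> f s <= M) ->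
  Rintegral (@lebesgue_measure R) `[a, c] f <= M * (c - a).
Proof.
move=> ac f_int fM.
have -> : M * (c - a) = Rintegral (@lebesgue_measure R) `[a, c] (fun=> M).
  rewrite Rintegral_cst //= lebesgue_measure_itv /= lte_fin.
  by case: ltgtP ac => // -> _; rewrite subrr mulr0.
apply: le_Rintegral => //.
  apply: continuous_compact_integrable; first exact: segment_compact.
  by apply: continuous_subspaceT => ?; apply: cvg_cst.
Qed.

Section AifTem.
Variables (R : realType) (x : R -> R) (kappa delta cmax : R) (w N : nat).
Variables (t b : nat -> R).
Hypothesis tem : aif_tem x kappa delta N t b.
Hypothesis x_bounded : bounded_by x cmax.

Local Notation c := (local_max_amp x t w).

Lemma firing_times_le i j : (i <= j <= N)%N -> t i <= t j.
Proof.
case: tem => t_incr _; elim: j => [|j IHj] /andP[ij jN].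
  by move: ij; rewrite leqn0 => /eqP ->.
move: ij; rewrite leq_eqVlt => /orP[/eqP -> //|ij].
by apply: le_trans (IHj _) (ltW (t_incr _ jN)); rewrite -ltnS ij ltnW.
Qed.

Lemma firing_interval_gt0 n : (1 <= n <= N)%N -> 0 < t n - t n.-1.
Proof.
case: tem => t_incr _ n_in; rewrite subr_gt0.
by case: n n_in => // n /andP[_ nN]; apply: t_incr.
Qed.

Lemma abs_le_local_max_amp n s : (0 < w)%N -> (1 <= n <= N)%N ->
  t n.-1 <= s <= t n -> `|x s| <= c n.
Proof.
move=> w_gt0 n_in /andP[s_ge s_le].
apply: ub_le_sup; first by exists cmax => _ [u _ <-].
exists s => //; rewrite /= in_itv /= s_le andbT.
by apply: le_trans s_ge; apply: firing_times_le; lia.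
Qed.

Lemma local_max_amp_le n : (n <= N)%N -> c n <= cmax.
Proof.
move=> nN; apply: ge_sup; last by move=> _ [s _ <-].
exists `|x (t n)|, (t n) => //.
by rewrite /= in_itv /= lexx andbT firing_times_le //; lia.
Qed.

Lemma kappa_delta_le n : 0 < kappa -> (0 < w)%N -> (1 <= n <= N)%N ->
  kappa * delta <= (b n + c n) * (t n - t n.-1).
Proof.
move=> kappa_gt0 w_gt0 n_in; case: tem => _ [_ /(_ n n_in)[<- int_xb]].
rewrite mulrA mulfV ?gt_eqF // mul1r.
apply: Rintegral_itv_le => // [|s s_in].
  by rewrite ltW // -subr_gt0 firing_interval_gt0.
rewrite addrC lerD2l; apply: le_trans (ler_norm _) _.
exact: abs_le_local_max_amp.
Qed.

End AifTem.

Theorem theorem1 (R : realType) (Omega cmax kappa delta beta : R) (w N : nat)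
  (x : R -> R) (t b : nat -> R) :
  0 < Omega -> 0 < cmax ->
  bandlimited Omega x -> bounded_by x cmax -> finite_energy x ->
  0 < kappa -> 0 < delta -> (1 <= w)%N -> 0 < beta -> (1 <= N)%N ->
  aif_tem x kappa delta N t b ->
  map_success x w N t b beta ->
  let c := local_max_amp x t w in
  avg_oversampling Omega N t
    <= (avg N b + avg N c) / (kappa * delta) * (pi / Omega) /\
  (avg N b + avg N c) / (kappa * delta) * (pi / Omega)
    <= (avg N b + cmax) / (kappa * delta) * (pi / Omega).
Proof.
move=> Omega_gt0 _ _ x_bounded _ kappa_gt0 delta_gt0 w_gt0 _ N_gt0 tem _ c.
have K_gt0 : 0 < kappa * delta by rewrite mulr_gt0.
have pi_Omega_ge0 : 0 <= pi / Omega by rewrite divr_ge0 ?ltW ?pi_gt0.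
have Kinv_ge0 : 0 <= (kappa * delta)^-1 by rewrite invr_ge0 ltW.
have T_gt0 n : (1 <= n <= N)%N -> 0 < t n - t n.-1.
  exact: firing_interval_gt0 tem n.
have K_le n : (1 <= n <= N)%N -> kappa * delta <= (b n + c n) * (t n - t n.-1).
  exact: kappa_delta_le tem x_bounded n kappa_gt0 w_gt0.
split.
- rewrite ler_wpM2r // -avgD ler_pdivlMr // mulrC ler_pdivrMr ?avg_gt0 //.
  by rewrite [X in _ <= X]mulrC avg_mul_avg_ge ?ltW.
- rewrite ler_wpM2r // ler_wpM2r // lerD2l.
  by apply: avg_le_cst => // n /andP[_ nN]; apply: local_max_amp_le tem x_bounded _ nN.
Qed.
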